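(* Let ${\mathcal B}$ be a finite family of nonzero elements of $L$. Then ${\mathcal B}$ is $w_S$-semi-reduced if and only if the family $\big(\operatorname{sred}^{w_S(b)}_S(b)\big)_{b\in{\mathcal B}}$ is linearly independent over $k_\mathfrak p$.
   Context: Let $A$ be a Dedekind domain with fraction field $K$, $\mathfrak p$ a nonzero prime ideal with valuation $v_\mathfrak p$, $\pi\in\mathfrak p$ with $v_\mathfrak p(\pi)=1$, $k_\mathfrak p=A/\mathfrak p$. Let $f\in A[x]$ be monic irreducible separable, $\theta$ a root, $L=K(\theta)$, $\mathcal O$ the integral closure of $A$ in $L$, $S=\{\mathfrak P_1,\dots,\mathfrak P_s\}$ the primes of $\mathcal O$ over $\mathfrak p$ with ramification indices $e_i$, normalized valuations $v_{\mathfrak P_i}$, valuation rings $\mathcal O_{(\mathfrak P_i)}$; $w_{\mathfrak P_i}=v_{\mathfrak P_i}/e_i$, $w_S(z)=\min_iw_{\mathfrak P_i}(z)$. For $r\in\mathbb Q$ and $z\in L$ with $w_{\mathfrak P_i}(z)\ge\lfloor r\rfloor$, $\operatorname{sred}^r_{\mathfrak P_i}(z)$ is the class of $\pi^{-\lfloor r\rfloor}z$ in the $k_\mathfrak p$-vector space $\mathcal O_{(\mathfrak P_i)}/\pi\mathcal O_{(\mathfrak P_i)}$ (which the paper identifies with $k_{\mathfrak P_i}^{e_i}$ via the first $e_i$ $\pi_{\mathfrak P_i}$-adic digits), and for $w_S(z)\ge\lfloor r\rfloor$, $\operatorname{sred}^r_S(z):=(\operatorname{sred}^r_{\mathfrak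 P_i}(z))_{1\le i\le s}\in\prod_i\mathcal O_{(\mathfrak P_i)}/\pi\mathcal O_{(\mathfrak P_i)}$. A finite family ${\mathcal B}\subset L$ is $w$-semi-reduced if $\lfloor w(\sum_b\lambda_bb)\rfloor=\min_b\lfloor w(\lambda_bb)\rfloor$ for all $\lambda_b\in K$. *)

From HB Require Import structures.
From mathcomp Require Import all_boot all_order all_algebra all_field.
Set Implicit Arguments. Unset Strict Implicit. Unset Printing Implicit Defensive.
Import Order.TTheory GRing.Theory Num.Theory.
Local Open Scope ring_scope.

(* A (discrete, Z-valued) valuation on a field F, given by its values on
   nonzero elements (the value at 0 is irrelevant; 0 has valuation +oo). *)
Definition is_dval (F : fieldType) (v : F -> int) : Prop :=
  (forall x y, x != 0 -> y != 0 -> v (x * y) = v x + v y) /\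
  (forall x y, x != 0 -> y != 0 -> x + y != 0 -> Num.min (v x) (v y) <= v (x + y)).

(* Extended values: None stands for +oo. *)
Definition omin (d : Order.disp_t) (T : orderType d) (x y : option T) : option T :=
  match x, y with
  | None, _ => y
  | _, None => x
  | Some a, Some b => Some (Order.min a b)
  end.

Section Setting.
Variables (K : fieldType) (L : fieldExtType K) (I : finType)
          (v : I -> L -> int) (e : I -> nat).

Definition wP (i : I) (z : L) : option rat :=
  if z == 0 then None else Some ((v i z)%:~R / (e i)%:R).

Definition wS (z : L) : option rat := \big[@omin _ _/None]_(i : I) wP i z.

Definition ofloor (x : option rat) : option int := omap (@Num.floor rat) x.

Definition semi_reduced (n : nat) (b : 'I_n -> L) : Prop :=
  forall lam : 'I_n -> K,
    ofloor (wS (\sum_(j < n) lam j *: b j))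
    = \big[@omin _ _/None]_(j < n) ofloor (wS (lam j *: b j)).

Definition flwS (z : L) : int := odflt 0 (ofloor (wS z)).

(* z lies in pi * O_(P_i), i.e. its class in O_(P_i)/pi O_(P_i) is zero
   (for v_{P_i}(pi) = e_i: v_{P_i}(z) >= e_i, or z = 0). *)
Definition in_piO (i : I) (z : L) : bool := (z == 0) || ((e i)%:Z <= v i z).

Variables (vp : K -> int) (pi : K).

(* lambda lies in the valuation ring A_p of v_p, resp. in its maximal ideal;
   k_p = A/p = A_p/pA_p. *)
Definition in_Ap (a : K) : bool := (a == 0) || (0 <= vp a).
Definition in_mp (a : K) : bool := (a == 0) || (0 < vp a).

(* The lift of sred^{w_S(z)}_S(z): pi^{-floor(w_S z)} z in prod_i O_(P_i). *)
Definition sred_lift (z : L) : L := (pi ^ (- flwS z)) *: z.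

(* The family (sred^{w_S(b_j)}_S(b_j))_j in prod_i O_(P_i)/pi O_(P_i) is
   k_p-linearly independent.  Written out: scalars of k_p are classes of
   lam in A_p (zero iff lam in p A_p), they act by ( [lam] . [z] = [lam z] ),
   and an element of the product is zero iff each component lies in pi O_(P_i). *)
Definition sred_free (n : nat) (b : 'I_n -> L) : Prop :=
  forall lam : 'I_n -> K,
    (forall j, in_Ap (lam j)) ->
    (forall i, in_piO i (\sum_(j < n) lam j *: sred_lift (b j))) ->
    forall j, in_mp (lam j).

End Setting.

From Pilot Require Import Defs.
From HB Require Import structures.
From mathcomp Require Import all_boot all_order all_algebra all_field.
From mathcomp Require Import ring lra.
Import Order.TTheory GRing.Theory Num.Theory.
Set Implicit Arguments. Unset Strict Implicit. Unset Printing Implicit Defensive.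
Local Open Scope ring_scope.

(* Scaling by a in K shifts every w_{P_i}, hence w_S, by v_p(a), so
   floor(w_S(lam b)) = v_p(lam) + floor(w_S(b)); in particular semi-reducedness
   is unchanged when each b is replaced by c = pi^(-floor(w_S b)) b, the lift of
   sred_S(b), for which floor(w_S c) = 0.  For such a family the ultrametric
   inequality gives floor(w_S(sum lam_c c)) >= m := min_c v_p(lam_c), and
   equality fails exactly when pi^(-m) sum lam_c c lies in pi O_(P_i) for all i,
   i.e. when the coefficients pi^(-m) lam_c, which lie in A_p and are not all in
   p A_p, give a nontrivial k_p-relation among the sred_S(b). *)

Section ExtendedOrder.
Variables (d : Order.disp_t) (T : orderType d).

Definition ole (x y : option T) : bool :=
  match x, y with
  | _, None => true
  | Some a, Some b => (a <= b)%O
  | None, Some _ => false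
  end.

Lemma ole_refl x : ole x x.
Proof. by case: x => /=. Qed.

Lemma ole_trans x y z : ole x y -> ole y z -> ole x z.
Proof. by case: x => [a|]; case: y => [b|]; case: z => [c|] //=; apply: le_trans. Qed.

Lemma ole_anti x y : ole x y -> ole y x -> x = y.
Proof.
case: x => [a|]; case: y => [b|] //= h1 h2.
by congr Some; apply/eqP; rewrite eq_le h1 h2.
Qed.

Lemma ole_omin c x y : ole c (omin x y) = ole c x && ole c y.
Proof.
by case: x => [a|]; case: y => [b|]; case: c => [c|] //=; rewrite ?andbT // le_min.
Qed.

Lemma ole_bigomin (I : eqType) (r : seq I) (F : I -> option T) c :
  ole c (\big[@omin _ T/None]_(i <- r) F i) = all (fun i => ole c (F i)) r.
Proof.
elim: r => [|a r IH]; first by rewrite big_nil; case: c.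
by rewrite big_cons ole_omin IH.
Qed.

Lemma bigomin_ole (I : eqType) (r : seq I) (F : I -> option T) i :
  i \in r -> ole (\big[@omin _ T/None]_(i <- r) F i) (F i).
Proof.
move=> ir; have := ole_bigomin r F (\big[@omin _ T/None]_(i <- r) F i).
by rewrite ole_refl => /esym/allP; apply.
Qed.

Lemma omin_cases (x y : option T) : omin x y = x \/ omin x y = y.
Proof.
case: x => [a|]; case: y => [b|] /=; try by [left|right].
by have [h|h] := leP a b; [left|right].
Qed.

Lemma bigomin_attained (I : eqType) (r : seq I) (F : I -> option T) :
  \big[@omin _ T/None]_(i <- r) F i = None \/
  exists2 i, i \in r & \big[@omin _ T/None]_(i <- r) F i = F i.
Proof.
elim: r => [|a r IH]; first by left; rewrite big_nil.
rewrite big_cons; case: (omin_cases (F a) (\big[@omin _ T/None]_(i <- r) F i)) => ->.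
  by right; exists a => //; rewrite mem_head.
case: IH => [->|[i ir ->]]; first by left.
by right; exists i => //; rewrite in_cons ir orbT.
Qed.

End ExtendedOrder.

Lemma omap_omin d (T : orderType d) d' (T' : orderType d') (f : T -> T') :
  {homo f : x y / (x <= y)%O} -> {morph omap f : x y / omin x y >-> omin x y}.
Proof.
move=> hf [a|] [b|] //=; congr Some.
have [h|h] := leP a b; first by rewrite !min_l // hf.
by rewrite !min_r // hf // ltW.
Qed.

Section DiscreteValuation.
Variables (F : fieldType) (w : F -> int).
Hypothesis hw : is_dval w.

Lemma dval1 : w 1 = 0.
Proof.
have := hw.1 1 1 (oner_neq0 _) (oner_neq0 _).
by rewrite mulr1 -{1}(addr0 (w 1)) => /addrI.
Qed.

Lemma dvalV x : x != 0 -> w x^-1 = - w x.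
Proof.
move=> hx; have := hw.1 x x^-1 hx (invr_neq0 hx).
by rewrite mulfV // dval1 => /eqP; rewrite eq_sym addr_eq0 => /eqP ->; rewrite opprK.
Qed.

Lemma dval_expz p : p != 0 -> w p = 1 -> forall k : int, w (p ^ k) = k.
Proof.
move=> hp h1.
have hn (n : nat) : w (p ^+ n) = n.
  elim: n => [|n IH]; first by rewrite expr0 dval1.
  by rewrite exprS hw.1 ?expf_neq0 // h1 IH -addn1 PoszD addrC.
by case=> n; rewrite ?NegzE -?exprnN ?dvalV ?expf_neq0 // hn.
Qed.

End DiscreteValuation.

Section SemiReduced.
Variables (K : fieldType) (L : fieldExtType K) (I : finType)
          (v : I -> L -> int) (e : I -> nat) (vp : K -> int) (pi : K).
Hypotheses (hv : forall i, is_dval (v i)) (he : forall i, (0 < e i)%N)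
           (hK : forall i (a : K), a != 0 -> v i a%:A = (e i)%:Z * vp a).
Hypotheses (hI : (0 < #|I|)%N) (hvp : is_dval vp) (hpi0 : pi != 0) (hpi1 : vp pi = 1).

Local Notation wP := (Defs.wP v e).
Local Notation wS := (Defs.wS v e).
Local Notation flwS := (Defs.flwS v e).
Local Notation sred_lift := (Defs.sred_lift v e pi).

Lemma wS0 : wS 0 = None.
Proof. by rewrite /Defs.wS; elim/big_rec: _ => // i x _ ->; rewrite /Defs.wP eqxx. Qed.

Lemma ole_wS c z : ole c (wS z) = [forall i, ole c (wP i z)].
Proof.
rewrite /Defs.wS ole_bigomin; apply/allP/forallP => [h i|h i _] //.
by apply: h; rewrite mem_index_enum.
Qed.

Lemma wS_Some z : z != 0 -> exists q, wS z = Some q.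
Proof.
move=> hz; rewrite /Defs.wS.
case: (bigomin_attained (index_enum I) (wP^~ z)) => [h|[i _ ->]].
  have /card_gt0P [i _] := hI.
  have := ole_refl (wS z); rewrite {1}/Defs.wS h ole_wS => /forallP /(_ i).
  by rewrite /Defs.wP (negbTE hz).
by rewrite /Defs.wP (negbTE hz); eexists.
Qed.

Lemma wP_scale i a z : a != 0 -> z != 0 ->
  wP i (a *: z) = omap (fun q => (vp a)%:~R + q) (wP i z).
Proof.
move=> ha hz; rewrite /Defs.wP scaler_eq0 (negbTE ha) (negbTE hz) /=; congr Some.
have hA : a%:A != 0 :> L by rewrite scaler_eq0 oner_eq0 orbF.
rewrite -mulr_algl (hv i).1 // hK // intrD intrM.
have he0 : ((e i)%:R : rat) != 0 by rewrite pnatr_eq0 -lt0n he.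
have -> : ((e i)%:Z)%:~R = (e i)%:R :> rat by [].
by field.
Qed.

Lemma wS_scale a z : a != 0 -> z != 0 -> wS (a *: z) = omap (fun q => (vp a)%:~R + q) (wS z).
Proof.
move=> ha hz; rewrite /Defs.wS.
have hf : {homo (fun q : rat => (vp a)%:~R + q) : x y / (x <= y)%O} by move=> x y; rewrite lerD2l.
rewrite (big_morph _ (omap_omin hf) erefl).
by apply: eq_bigr => i _; rewrite wP_scale.
Qed.

Lemma wS_add c x y : ole c (wS x) -> ole c (wS y) -> ole c (wS (x + y)).
Proof.
rewrite !ole_wS => /forallP hx /forallP hy; apply/forallP => i.
have {hx hy} := (hx i, hy i).
have [->|x0] := eqVneq x 0; first by rewrite add0r => -[].
have [->|y0] := eqVneq y 0; first by rewrite addr0 => -[].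
have [->|s0] := eqVneq (x + y) 0; first by rewrite /Defs.wP eqxx; case: c.
rewrite /Defs.wP (negbTE x0) (negbTE y0) (negbTE s0).
case: c => [r|] /= [h1 h2] //.
have hep : (0 : rat) < (e i)%:R by rewrite ltr0n.
have := (hv i).2 x y x0 y0 s0; rewrite ge_min => /orP[] hm.
  by apply: le_trans h1 _; rewrite ler_pM2r ?invr_gt0 // ler_int.
by apply: le_trans h2 _; rewrite ler_pM2r ?invr_gt0 // ler_int.
Qed.

Lemma wS_sum c n (F : 'I_n -> L) : (forall j, ole c (wS (F j))) -> ole c (wS (\sum_(j < n) F j)).
Proof.
move=> h; apply: (big_ind (fun z => ole c (wS z))) => //; last exact: wS_add.
by rewrite wS0; case: c {h}.
Qed.

Lemma in_piO_wS z : (forall i, in_piO v e i z) <-> ole (Some 1) (wS z).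
Proof.
rewrite ole_wS; split=> [h|/forallP h]; first apply/forallP; move=> i;
  have := h i; rewrite /in_piO /Defs.wP; case: eqP => //= _;
  by rewrite ler_pdivlMr ?ltr0n // mul1r -[(e i)%:R]/(((e i)%:Z)%:~R) ler_int.
Qed.

Lemma ofloor_ole (c : option int) (x : option rat) :
  ole c (ofloor x) = ole (omap (fun m => m%:~R) c) x.
Proof. by case: c => [m|]; case: x => [q|] //=; rewrite floor_ge_int. Qed.

Lemma ofloor_wS_scale a z : a != 0 -> z != 0 -> ofloor (wS (a *: z)) = Some (vp a + flwS z).
Proof.
move=> ha hz; have [q hq] := wS_Some hz.
by rewrite wS_scale // /Defs.flwS /ofloor hq /= floorDzr ?intr_int // intrKfloor.
Qed.

Lemma ofloor_wS_scale_lift a z : a != 0 -> z != 0 -> ofloor (wS (a *: sred_lift z)) = Some (vp a).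
Proof.
move=> ha hz; rewrite /Defs.sred_lift scalerA ofloor_wS_scale ?mulf_neq0 ?expfz_neq0 //.
by rewrite hvp.1 ?expfz_neq0 // (dval_expz hvp) // addrNK.
Qed.

Lemma in_piO_scale_pi (m : int) z :
  ole (Some (m + 1)%:~R) (wS z) -> forall i, in_piO v e i (pi ^ (- m) *: z).
Proof.
move=> hz; apply/in_piO_wS.
have [->|z0] := eqVneq z 0; first by rewrite scaler0 wS0.
rewrite wS_scale ?expfz_neq0 // (dval_expz hvp) //.
by move: hz; case: (wS z) => //= q; rewrite intrD intrN; lra.
Qed.

Lemma bigomin_ofloor_wS_le n (F : 'I_n -> L) :
  ole (\big[@omin _ _/None]_(j < n) ofloor (wS (F j))) (ofloor (wS (\sum_(j < n) F j))).
Proof.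
rewrite ofloor_ole; apply: wS_sum => j; rewrite -ofloor_ole.
exact: bigomin_ole (mem_index_enum j).
Qed.

Lemma semi_reduced_scale n (a : 'I_n -> K) (b : 'I_n -> L) : (forall j, a j != 0) ->
  semi_reduced v e (fun j => a j *: b j) <-> semi_reduced v e b.
Proof.
move=> ha; split=> h lam.
- have E j : (lam j / a j) *: (a j *: b j) = lam j *: b j by rewrite scalerA divfK.
  have := h (fun j => lam j / a j); rewrite (eq_bigr _ (fun j _ => E j)).
  by rewrite (eq_bigr _ (fun j _ => congr1 (fun z => ofloor (wS z)) (E j))).
- have E j : (lam j * a j) *: b j = lam j *: (a j *: b j) by rewrite scalerA.
  have := h (fun j => lam j * a j); rewrite (eq_bigr _ (fun j _ => E j)).
  by rewrite (eq_bigr _ (fun j _ => congr1 (fun z => ofloor (wS z)) (E j))).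
Qed.

Lemma sred_free_of_semi_reduced_lift n (b : 'I_n -> L) : (forall j, b j != 0) ->
  semi_reduced v e (fun j => sred_lift (b j)) -> sred_free v e vp pi b.
Proof.
move=> hb hsr lam hA hO j0; apply/negPn/negP => hunit.
have l0 : lam j0 != 0 by apply: contraNneq hunit => ->; rewrite /in_mp eqxx.
have vl0 : vp (lam j0) = 0.
  move: hunit (hA j0); rewrite /in_mp /in_Ap (negbTE l0) /= -leNgt => h1 h2.
  by apply/eqP; rewrite eq_le h1 h2.
have hsum : ole (Some 1) (ofloor (wS (\sum_(j < n) lam j *: sred_lift (b j)))).
  by rewrite ofloor_ole; apply/in_piO_wS.
rewrite (hsr lam) in hsum.
have : ole (\big[@omin _ _/None]_(j < n) ofloor (wS (lam j *: sred_lift (b j))))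
            (ofloor (wS (lam j0 *: sred_lift (b j0)))).
  exact: bigomin_ole (mem_index_enum j0).
by move/(ole_trans hsum); rewrite ofloor_wS_scale_lift // vl0.
Qed.

Lemma semi_reduced_lift_of_sred_free n (b : 'I_n -> L) : (forall j, b j != 0) ->
  sred_free v e vp pi b -> semi_reduced v e (fun j => sred_lift (b j)).
Proof.
move=> hb hfree lam; apply: ole_anti; last exact: bigomin_ofloor_wS_le.
set S := \sum_(j < n) _.
set R := \big[@omin _ _/None]_(j < n) _.
have hle j : ole R (ofloor (wS (lam j *: sred_lift (b j)))).
  exact: bigomin_ole (mem_index_enum j).
case: (bigomin_attained (index_enum 'I_n)
  (fun j => ofloor (wS (lam j *: sred_lift (b j))))) => [|[j0 _]];
  rewrite -/R => hR; rewrite hR; first by case: (ofloor _).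
have [l0|l0] := eqVneq (lam j0) 0; first by rewrite l0 scale0r wS0; case: (ofloor _).
rewrite ofloor_wS_scale_lift // in hR *.
set m := vp (lam j0) in hR *.
apply/negPn/negP => hgt.
have hS : ole (Some (m + 1)%:~R) (wS S).
  by move: hgt; case: (wS S) => //= q; rewrite -floor_ge_int lezD1 ltNge.
pose alpha j := lam j * pi ^ (- m).
have hA j : in_Ap vp (alpha j).
  rewrite /in_Ap /alpha; have [->|lj] := eqVneq (lam j) 0; first by rewrite mul0r eqxx.
  have := hle j; rewrite hR ofloor_wS_scale_lift //= => hm.
  by rewrite hvp.1 ?expfz_neq0 // (dval_expz hvp) // subr_ge0 hm orbT.
have hO i : in_piO v e i (\sum_(j < n) alpha j *: sred_lift (b j)).
  rewrite (eq_bigr (fun j => pi ^ (- m) *: (lam j *: sred_lift (b j)))) => [|j _].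
    by rewrite -scaler_sumr; apply: in_piO_scale_pi hS i.
  by rewrite /alpha !scalerA (mulrC (lam j)).
have := hfree alpha hA hO j0.
rewrite /in_mp /alpha mulf_eq0 (negbTE l0) expfz_eq0 (negbTE hpi0) andbF /=.
by rewrite hvp.1 ?expfz_neq0 // (dval_expz hvp) // subrr.
Qed.

End SemiReduced.

Unset Implicit Arguments.
Theorem mainTheorem7 (K : fieldType) (L : fieldExtType K)
    (vp : K -> int) (pi : K)
    (I : finType) (v : I -> L -> int) (e : I -> nat)
    (n : nat) (b : 'I_n -> L) :
  is_dval vp -> pi != 0 -> vp pi = 1 ->
  (0 < #|I|)%N ->
  (forall i, is_dval (v i)) ->
  (forall i, (0 < e i)%N) ->
  (forall i (a : K), a != 0 -> v i (a%:A) = (e i)%:Z * vp a) ->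
  (forall j, b j != 0) ->
  semi_reduced v e b <-> sred_free v e vp pi b.
Proof.
move=> hvp hpi0 hpi1 hI hv he hK hb.
have hpow j : pi ^ (- flwS v e (b j)) != 0 by exact: expfz_neq0.
apply: iff_trans (iff_sym (semi_reduced_scale v e b hpow)) _; split.
  exact: (sred_free_of_semi_reduced_lift hv he hK hI hvp hpi0 hpi1 hb).
exact: (semi_reduced_lift_of_sred_free hv he hK hI hvp hpi0 hpi1 hb).
Qed.
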